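(* For every positive integer $k$, $f(k)\geq \frac{k(k-2)}{3}$.
   Context: A $k$-colouring of the edges of the complete graph $K_n$ (colours from $[k]=\{1,\dots,k\}$) is called connected if for each colour $i\in[k]$ the edges of colour $i$ form a connected spanning subgraph of $K_n$ (i.e. a connected graph on all $n$ vertices). A triangle is multicoloured if its three edges have three distinct colours; its colour set is the set of these three colours. $f(k)$ denotes the minimum, over all $n$ and all connected $k$-colourings of $K_n$, of the number of distinct $3$-sets of colours that occur as colour sets of multicoloured triangles. *)

From mathcomp Require Import all_boot all_order all_algebra.
Set Implicit Arguments. Unset Strict Implicit. Unset Printing Implicit Defensive.

(* An edge colouring of K_n with colours 'I_k (standing for [k] = {1..k}).
   c x y is the colour of the edge {x,y} (x != y); symmetry is required,
   values on the diagonal are irrelevant. *)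
Definition symmetric_colouring (n k : nat) (c : 'I_n -> 'I_n -> 'I_k) : Prop :=
  forall x y : 'I_n, c x y = c y x.

Definition colour_rel (n k : nat) (c : 'I_n -> 'I_n -> 'I_k) (i : 'I_k) : rel 'I_n :=
  fun x y => (x != y) && (c x y == i).

Definition connected_colouring (n k : nat) (c : 'I_n -> 'I_n -> 'I_k) : Prop :=
  forall (i : 'I_k) (x y : 'I_n), connect (colour_rel c i) x y.

Definition multicoloured (n k : nat) (c : 'I_n -> 'I_n -> 'I_k) (x y z : 'I_n) : bool :=
  [&& x != y, y != z, x != z,
      c x y != c y z, c x y != c x z & c y z != c x z].

Definition triangle_colour_sets (n k : nat) (c : 'I_n -> 'I_n -> 'I_k)
  : {set {set 'I_k}} :=
  [set [set c t.1.1 t.1.2; c t.1.2 t.2; c t.1.1 t.2]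
     | t : 'I_n * 'I_n * 'I_n & multicoloured c t.1.1 t.1.2 t.2].

From mathcomp Require Import all_boot all_order all_algebra zify.
Set Implicit Arguments. Unset Strict Implicit. Unset Printing Implicit Defensive.

(* Gallai-type lemma: in a colouring without rainbow triangles, if three
   distinct colours each span a connected subgraph, deleting any vertex u keeps
   each of them connected (were red disconnected by u, every edge at u would be
   red, so another spanning colour could not reach u); inducting down to two
   vertices, which cannot carry two spanning colours, gives a contradiction.
   For a colour i and a set A of other colours with A and the colours outside
   i |: A nonempty, merging the colours into the classes {i}, A and the rest
   keeps three spanning colours, so some multicoloured triangle uses i, a colour
   of A and a colour outside A.  Hence the colour sets through i connect the
   k - 1 other colours, so there are at least k - 2 of them; summing over i
   counts each colour set at most three times. *)

Lemma connect_exit (T : finType) (e : rel T) (X : {pred T}) x y :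
  connect e x y -> x \in X -> y \notin X ->
  exists a b, [/\ a \in X, b \notin X & e a b].
Proof.
case/connectP => p; elim: p x => [|z p IH] x /=; first by move=> _ -> ->.
case/andP => exz pz ey xX yX.
have [zX | zX] := boolP (z \in X); first exact: IH zX yX.
by exists x, z.
Qed.

Lemma connect_ind (T : finType) (e : rel T) (P : T -> Prop) x y :
  (forall a b, P a -> e a b -> P b) -> connect e x y -> P x -> P y.
Proof.
move=> stepP /connectP [p]; elim: p x => [|z p IH] x /=; first by move=> _ ->.
by case/andP => exz pz ey Px; apply: IH pz ey (stepP _ _ Px exz).
Qed.

Section RainbowTriangle.
Variables (T : finType) (C : eqType) (d : T -> T -> C).
Hypothesis d_sym : forall x y, d x y = d y x.
Implicit Types (S : {set T}) (col : C).

Definition colour_edge (S : {set T}) (col : C) : rel T :=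
  fun a b => [&& a \in S, b \in S, a != b & d a b == col].

Definition spans (S : {set T}) (col : C) : bool :=
  [forall x in S, forall y in S, connect (colour_edge S col) x y].

Definition rainbow (S : {set T}) : bool :=
  [exists x in S, exists y in S, exists z in S,
     [&& d x y != d y z, d x y != d x z & d y z != d x z]].

Lemma colour_edge_sym S col : symmetric (colour_edge S col).
Proof.
by move=> a b; rewrite /colour_edge d_sym eq_sym; case: (a \in S); case: (b \in S).
Qed.

Lemma spansP S col x y :
  spans S col -> x \in S -> y \in S -> connect (colour_edge S col) x y.
Proof. by move=> /forall_inP /(_ x) + xS yS => /(_ xS) /forall_inP; apply. Qed.

Lemma rainbowP S :
  reflect (exists x y z, [/\ x \in S, y \in S, z \in S &
             [&& d x y != d y z, d x y != d x z & d y z != d x z]])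
          (rainbow S).
Proof.
apply: (iffP idP).
  by case/exists_inP => x xS /exists_inP [y yS /exists_inP [z zS h]]; exists x, y, z.
case=> x [y [z [xS yS zS h]]].
apply/exists_inP; exists x => //; apply/exists_inP; exists y => //.
by apply/exists_inP; exists z.
Qed.

Lemma rainbow_free_eq S x y z : ~~ rainbow S -> x \in S -> y \in S -> z \in S ->
  d x y != d y z -> d y z != d x z -> d x y = d x z.
Proof.
move=> nr xS yS zS h1 h2; apply/eqP; apply: contraNT nr => h3.
by apply/rainbowP; exists x, y, z; rewrite h1 h2 h3.
Qed.

Lemma rainbowS S S' : S' \subset S -> rainbow S' -> rainbow S.
Proof.
move=> /subsetP sub /rainbowP [x [y [z [xS yS zS h]]]].
by apply/rainbowP; exists x, y, z; split; rewrite ?sub.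
Qed.

Lemma spans_neighbour S col u : spans S col -> 1 < #|S| -> u \in S ->
  exists z, [/\ z \in S, z != u & d u z = col].
Proof.
move=> spS /card_gt1P [a [b [aS bS ab]]] uS.
have [v vS vu] : exists2 v, v \in S & v != u.
  by case: (eqVneq a u) => [au|]; [exists b; rewrite // -au eq_sym | exists a].
have vX : v \notin pred1 u by rewrite inE.
have [_ [z [/eqP -> zu /and4P [_ zS _ /eqP dz]]]] :=
  connect_exit (X := pred1 u) (spansP spS uS vS) (eqxx u) vX.
by exists z; rewrite zS; split => //; rewrite inE in zu.
Qed.

Lemma spans_card_gt2 S p q : 1 < #|S| -> spans S p -> spans S q -> p != q -> 2 < #|S|.
Proof.
move=> S_gt1 sp sq; apply: contraNT; rewrite -leqNgt => S_le2.
have [u uS] : exists u, u \in S by apply/card_gt0P; apply: ltnW.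
have [zp [zpS zpu <-]] := spans_neighbour sp S_gt1 uS.
have [zq [zqS zqu <-]] := spans_neighbour sq S_gt1 uS.
suff -> : zp = zq by [].
have : #|S :\ u| <= 1 by move: S_le2; rewrite (cardsD1 u) uS.
by move/card_le1_eqP; apply; rewrite in_setD1 ?zpu ?zqu.
Qed.

Section CutVertex.
Variables (S : {set T}) (u : T) (red : C).
Hypotheses (uS : u \in S) (red_spans : spans S red) (no_rainbow : ~~ rainbow S).

Let S' := S :\ u.
Let e := colour_edge S' red.
Let component x : {pred T} := [pred z | (z \in S') && connect e x z].

Let sub_S' : {subset S' <= S}. Proof. by move=> z /setD1P []. Qed.
Let u_notin_S' : u \notin S'. Proof. by rewrite in_setD1 eqxx. Qed.
Let e_sym : connect_sym e. Proof. exact/sym_connect_sym/colour_edge_sym. Qed.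

Lemma red_connect a b : a \in S' -> b \in S' -> a != b -> d a b = red -> connect e a b.
Proof. by move=> aS bS ab dab; apply: connect1; rewrite /e /colour_edge aS bS ab dab eqxx. Qed.

Lemma unconnected_not_red a b : a \in S' -> b \in S' -> ~~ connect e a b -> d a b != red.
Proof.
move=> aS bS; apply: contraNneq => dab.
have [-> | ab] := eqVneq a b; [exact: connect0 | exact: red_connect].
Qed.

Lemma colour_const_on_component z z' w :
  connect e z z' -> w \in S' -> ~~ connect e z w -> d w z' = d w z.
Proof.
move=> czz' wS nczw.
pose P a := connect e z a /\ d w a = d w z.
suff [_ ->] : P z' by [].
apply: (connect_ind (P := P) _ czz') => [a b [cza dwa] eab |].
  2: by split; first exact: connect0.
have czb := connect_trans cza (connect1 eab).
have not_red x : x \in S' -> connect e z x -> d w x != red.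
  move=> xS czx; rewrite d_sym; apply: unconnected_not_red => //.
  by apply: contra nczw; apply: connect_trans.
move: eab => /and4P [aS bS _ /eqP dab]; split => //.
rewrite -dwa; symmetry.
apply: (rainbow_free_eq no_rainbow (sub_S' wS) (sub_S' aS) (sub_S' bS)).
  by rewrite dab not_red.
by rewrite dab eq_sym not_red.
Qed.

Lemma component_red_neighbour w : w \in S' -> exists2 r, r \in component w & d u r = red.
Proof.
move=> wS.
have wX : w \in component w by rewrite inE wS connect0.
have uX : u \notin component w by rewrite inE (negbTE u_notin_S').
have [a [b [aX bX /and4P [_ bS ab /eqP dab]]]] :=
  connect_exit (spansP red_spans (sub_S' wS) uS) wX uX.
have [bu | bu] := eqVneq b u; first by exists a; rewrite // -bu d_sym.
have bS' : b \in S' by rewrite in_setD1 bu.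
move: aX bX => /andP [aS cwa]; rewrite inE bS' /= => /negP [].
exact: connect_trans cwa (red_connect aS bS' ab dab).
Qed.

Lemma cut_vertex_colour x w : x \in S' -> w \in S' -> ~~ connect e x w ->
  d u x = red \/ d u x = d w x.
Proof.
move=> xS wS ncxw; have [r /andP [rS cwr] dur] := component_red_neighbour wS.
have ncxr : ~~ connect e x r.
  by apply: contra ncxw => cxr; rewrite (connect_trans cxr) // e_sym.
have drx : d r x = d w x.
  have ncwx : ~~ connect e w x by rewrite e_sym.
  by rewrite d_sym (colour_const_on_component cwr xS ncwx) d_sym.
have [<- | rux] := eqVneq (d r x) (d u x); first by right.
left; rewrite -dur; symmetry.
apply: (rainbow_free_eq no_rainbow uS (sub_S' rS) (sub_S' xS)) => //.
by rewrite dur eq_sym unconnected_not_red // e_sym.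
Qed.

Variables g1 g2 : C.
Hypotheses (red_g1 : red != g1) (red_g2 : red != g2) (g1_g2 : g1 != g2).
Hypotheses (g1_spans : spans S g1) (g2_spans : spans S g2).

Lemma cut_vertex_red_edges : ~~ spans S' red -> {in S', forall x, d u x = red}.
Proof.
move=> ncS x xS; apply/eqP; apply: contraT => dux_red.
have [w wS ncxw] : exists2 w, w \in S' & ~~ connect e x w.
  case/forall_inPn: ncS => x0 x0S /forall_inPn [y0 y0S nc0].
  have [cx0 | ] := boolP (connect e x x0); last by exists x0.
  by exists y0 => //; apply: contra nc0 => cxy; rewrite (connect_trans _ cxy) // e_sym.
have out_colour x' w' : x' \in component x -> w' \in S' -> w' \notin component x ->
    d w' x' = d u x.
  move=> /andP [_ cxx'] w'S; rewrite inE w'S /= => ncxw'.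
  rewrite (colour_const_on_component cxx' w'S ncxw').
  by have [dux | ->] := cut_vertex_colour xS w'S ncxw'; first by rewrite dux eqxx in dux_red.
have in_colour x' : x' \in component x -> d u x' = red \/ d u x' = d u x.
  move=> x'X; move: (x'X) => /andP [x'S cxx'].
  have ncx'w : ~~ connect e x' w by apply: contra ncxw; apply: connect_trans.
  have [-> | ->] := cut_vertex_colour x'S wS ncx'w; [by left | right].
  by apply: out_colour; rewrite // inE negb_and ncxw orbT.
(* A spanning colour other than red and d u x must leave the red component of
   x, yet every edge leaving it has one of these two colours. *)
have [b [b_spans b_red b_dux]] : exists b, [/\ spans S b, b != red & b != d u x].
  have [<- | g1_dux] := eqVneq g1 (d u x).
    by exists g2; split; rewrite // eq_sym.
  by exists g1; split; rewrite // eq_sym.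
have xX : x \in component x by rewrite inE xS connect0.
have uX : u \notin component x by rewrite inE (negbTE u_notin_S').
have [a [b' [aX b'X /and4P [_ b'S _ /eqP dab']]]] :=
  connect_exit (spansP b_spans (sub_S' xS) uS) xX uX.
have [b'u | b'u] := eqVneq b' u.
  by case: (in_colour a aX) => h; [move: b_red | move: b_dux];
    rewrite -dab' b'u d_sym h eqxx.
have b'S' : b' \in S' by rewrite in_setD1 b'u.
by move: b_dux; rewrite -dab' d_sym (out_colour a b' aX b'S' b'X) eqxx.
Qed.

Lemma spans_setD1 : spans S' red.
Proof.
apply: contraT => ncS.
have S_gt1 : 1 < #|S|.
  case/forall_inPn: (ncS) => x0 x0S _.
  by rewrite (cardsD1 u) uS ltnS; apply/card_gt0P; exists x0.
have [z [zS zu duz]] := spans_neighbour g1_spans S_gt1 uS.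
have zS' : z \in S' by rewrite in_setD1 zu.
by move: red_g1; rewrite -duz (cut_vertex_red_edges ncS zS') eqxx.
Qed.

End CutVertex.

Theorem spanning_colours_rainbow S p q r : 1 < #|S| ->
  p != q -> q != r -> p != r -> spans S p -> spans S q -> spans S r -> rainbow S.
Proof.
move=> + pq qr pr; have [m] := ubnP #|S|; elim: m S => // m IH S /ltnSE S_le_m S_gt1 sp sq sr.
apply: contraT => no_rainbow.
have [u uS] : exists u, u \in S by apply/card_gt0P; apply: ltnW.
have cardS' : #|S :\ u| = #|S|.-1 by rewrite (cardsD1 u S) uS.
have no_rainbow' : ~~ rainbow (S :\ u).
  by apply: contra no_rainbow; apply/rainbowS/subD1set.
case/negP: no_rainbow'; apply: IH.
- by rewrite cardS'; lia.
- by rewrite cardS' -subn1 ltn_subRL addn1 (spans_card_gt2 S_gt1 sp sq pq).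
- exact: (spans_setD1 uS sp no_rainbow pq pr qr sq sr).
- by apply: (spans_setD1 uS sq no_rainbow _ qr pr sp sr); rewrite eq_sym.
- by apply: (spans_setD1 uS sr no_rainbow _ _ pq sp sq); rewrite eq_sym.
Qed.

End RainbowTriangle.

Lemma card_set3 (K : finType) (a b c : K) : #|[set a; b; c]| <= 3.
Proof. by rewrite -setUA cardsU1 cards2; case: (_ \notin _); case: (_ != _). Qed.

Lemma sum_card_sets_containing (K : finType) (F : {set {set K}}) :
  \sum_(i : K) #|[set s in F | i \in s]| = \sum_(s in F) #|s|.
Proof.
transitivity (\sum_(i : K) \sum_(s in F) (i \in s : nat)).
  apply: eq_bigr => i _; rewrite -sum1_card (eq_bigl (fun s => (s \in F) && (i \in s))).
    by rewrite big_mkcondr; apply: eq_bigr => s _; case: (i \in s).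
  by move=> s; rewrite inE.
rewrite exchange_big; apply: eq_bigr => s _.
by rewrite -sum1_card [RHS]big_mkcond; apply: eq_bigr => i _; case: (i \in s).
Qed.

Section ColourClasses.
Variables (K : finType) (i : K) (A : {set K}).

Definition colour_class (e : K) : nat := if e == i then 0 else if e \in A then 1 else 2.

Lemma colour_class_le2 e : colour_class e <= 2.
Proof. by rewrite /colour_class; case: (e == i); case: (e \in A). Qed.

Lemma colour_class_eq0 e : (colour_class e == 0) = (e == i).
Proof. by rewrite /colour_class; case: (e == i); case: (e \in A). Qed.

Lemma colour_class_eq2 e : (colour_class e == 2) = (e \notin i |: A).
Proof. by rewrite /colour_class !inE; case: (e == i); case: (e \in A). Qed.

Lemma three_classes e1 e2 e3 :
  colour_class e1 != colour_class e2 -> colour_class e2 != colour_class e3 ->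
  colour_class e1 != colour_class e3 ->
  exists2 b, b \notin i |: A & [/\ i \in [set e1; e2; e3], b \in [set e1; e2; e3]
                                  & [set e1; e2; e3] \subset i |: (b |: A)].
Proof.
move=> h12 h23 h13; set s := [set e1; e2; e3].
have class_hit m : m <= 2 -> exists2 e, e \in s & colour_class e == m.
  move=> m_le2; have le2 := colour_class_le2.
  have : [|| colour_class e1 == m, colour_class e2 == m | colour_class e3 == m].
    by move: (le2 e1) (le2 e2) (le2 e3); lia.
  by case/or3P => h; [exists e1 | exists e2 | exists e3]; rewrite // !inE eqxx ?orbT.
have class_inj : {in s &, injective colour_class}.
  move=> x y; rewrite !inE -!orbA => /or3P [] /eqP -> /or3P [] /eqP -> // /eqP;
  by rewrite ?(negbTE h12) ?(negbTE h23) ?(negbTE h13) // eq_sym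
     ?(negbTE h12) ?(negbTE h23) ?(negbTE h13).
have [b bs b2] := class_hit 2 isT; exists b; first by rewrite -colour_class_eq2.
have i_s : i \in s by have [i' i's] := class_hit 0 isT; rewrite colour_class_eq0 => /eqP <-.
split=> //; apply/subsetP => e es.
have [-> | eb] := eqVneq e b; first by rewrite !inE eqxx orbT.
have : colour_class e != 2.
  by apply: contra_neq eb; rewrite -(eqP b2); exact: class_inj.
by rewrite colour_class_eq2 negbK !inE => /orP [] ->; rewrite ?orbT.
Qed.

End ColourClasses.

Section ConnectedColouring.
Variables (n k : nat) (c : 'I_n -> 'I_n -> 'I_k).
Hypotheses (c_sym : symmetric_colouring c) (c_con : connected_colouring c).

Lemma multicoloured_of_colours x y z :
  c x y != c y z -> c x y != c x z -> c y z != c x z -> multicoloured c x y z.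
Proof.
move=> h1 h2 h3; rewrite /multicoloured h1 h2 h3 !andbT.
apply/and3P; split; [apply: contraNneq h3 | apply: contraNneq h2 | apply: contraNneq h1] => ->//.
by rewrite c_sym.
Qed.

Lemma colour_set_mem x y z :
  multicoloured c x y z -> [set c x y; c y z; c x z] \in triangle_colour_sets c.
Proof. by move=> h; apply/imsetP; exists (x, y, z); rewrite ?inE. Qed.

Lemma merged_spans (C : eqType) (f : 'I_k -> C) col :
  spans (fun x y => f (c x y)) [set: 'I_n] (f col).
Proof.
apply/forall_inP => x _; apply/forall_inP => y _.
apply: connect_sub (c_con col x y) => a b /andP [ab /eqP cab].
by apply: connect1; rewrite /colour_edge !inE ab cab eqxx.
Qed.

Definition colour_sets_within (i : 'I_k) (A : {set 'I_k}) : {set {set 'I_k}} :=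
  [set s in triangle_colour_sets c | (i \in s) && (s \subset i |: A)].

Lemma colour_sets_within_grow (i : 'I_k) (A : {set 'I_k}) a b : 1 < n ->
  i \notin A -> a \in A -> b \notin i |: A ->
  exists2 b', b' \notin i |: A &
    #|colour_sets_within i A| < #|colour_sets_within i (b' |: A)|.
Proof.
move=> n_gt1 iA aA bA.
pose d x y := colour_class i A (c x y).
have d_sym x y : d x y = d y x by rewrite /d c_sym.
have class_spans m col : colour_class i A col = m -> spans d [set: 'I_n] m.
  by move=> <-; apply: merged_spans.
have : rainbow d [set: 'I_n].
  apply: (spanning_colours_rainbow d_sym (p := 0) (q := 1) (r := 2)) => //.
  - by rewrite cardsT card_ord.
  - by apply: (class_spans _ i); rewrite /colour_class eqxx.
  - apply: (class_spans _ a); rewrite /colour_class aA.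
    by case: eqP => // ai; rewrite -ai aA in iA.
  - by apply: (class_spans _ b); apply/eqP; rewrite colour_class_eq2.
case/rainbowP => x [y [z [_ _ _ /and3P [h1 h2 h3]]]].
have [b' b'A [i_s b_s sub]] := three_classes h1 h3 h2.
exists b' => //; apply/proper_card/properP; split.
  apply/subsetP => s; rewrite !inE => /andP [-> /andP [-> s_sub]] /=.
  by apply: subset_trans s_sub _; rewrite setUS // subsetUr.
exists [set c x y; c y z; c x z].
  rewrite inE colour_set_mem ?i_s ?sub //.
  apply: multicoloured_of_colours;
    [apply: contraNneq h1 | apply: contraNneq h2 | apply: contraNneq h3];
  by move=> eq_c; rewrite /d eq_c.
by rewrite inE negb_and negb_and i_s; apply/orP; right; apply/subsetPn; exists b'.
Qed.

Lemma card_colour_sets_through (i : 'I_k) : 1 < n -> 1 < k ->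
  k - 2 <= #|[set s in triangle_colour_sets c | i \in s]|.
Proof.
move=> n_gt1 k_gt1.
have chain t : t < k.-1 ->
    exists2 A : {set 'I_k}, i \notin A & #|A| = t.+1 /\ t <= #|colour_sets_within i A|.
  elim: t => [|t IH] t_lt.
    have /card_gt0P [a] : 0 < #|[set~ i]| by rewrite cardsC1 card_ord; lia.
    by rewrite !inE => ai; exists [set a]; rewrite ?inE 1?eq_sym ?cards1.
  have [A iA [cardA le_t]] := IH (ltnW t_lt).
  have [a aA] : exists a, a \in A by apply/card_gt0P; rewrite cardA.
  have /card_gt0P [b] : 0 < #|~: (i |: A)|.
    by move: (cardsC (i |: A)); rewrite cardsU1 iA cardA card_ord; lia.
  rewrite inE => bA; have [b' b'A lt] := colour_sets_within_grow n_gt1 iA aA bA.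
  move: b'A; rewrite !inE negb_or => /andP [b'i b'A].
  exists (b' |: A); first by rewrite !inE negb_or eq_sym b'i.
  by rewrite cardsU1 b'A cardA; split => //; apply: leq_trans lt.
have [A _ [_ le_within]] := chain (k - 2) ltac:(lia).
apply: leq_trans le_within (subset_leq_card _).
by apply/subsetP => s; rewrite !inE => /andP [-> /andP [-> _]].
Qed.

End ConnectedColouring.

Theorem corollary2 (k : nat) (hk : (0 < k)%N) (n : nat) (hn : (2 <= n)%N)
  (c : 'I_n -> 'I_n -> 'I_k) :
  symmetric_colouring c -> connected_colouring c ->
  ((k%:Z * (k%:Z - 2%:Z)) <= 3%:Z * (#|triangle_colour_sets c|)%:Z)%R.
Proof.
move=> c_sym c_con; have [k_le1 | k_gt1] := leqP k 1; first by nia.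
suff : k * (k - 2) <= 3 * #|triangle_colour_sets c| by rewrite subzn // -!PoszM lez_nat.
have -> : k * (k - 2) = \sum_(i < k) (k - 2) by rewrite sum_nat_const card_ord.
apply: (leq_trans (leq_sum _ (fun i _ => card_colour_sets_through c_sym c_con i hn k_gt1))).
rewrite sum_card_sets_containing mulnC -sum_nat_const.
by apply: leq_sum => s /imsetP [t _ ->]; apply: card_set3.
Qed.
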